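(* Let $V$ be an $\mathrm{FI}_G$-module with $\deg(V)<\infty$. Then $hd_i(V)\le i+\deg(V)$ for all $i\ge1$.
   Context: Fix a commutative ring $k$ and a group $G$. $\mathrm{FI}_G$ is the category with objects $[n]$ ($n\ge0$) and morphisms $[n]\to[m]$ the pairs $(f,g)$ with $f$ injective and $g:[n]\to G$ a map of sets; composition $(f,g)\circ(f',g')=(f\circ f',h)$, $h(x)=g'(x)\,g(f'(x))$. An $\mathrm{FI}_G$-module is a functor $V:\mathrm{FI}_G\to\mathrm{Mod}_k$, $V_n=V([n])$. $\deg V=\sup\{n:V_n\ne0\}$ ($\sup\emptyset=-\infty$). $H_0(V)_n=V_n/V_{<n}$ ($V_{<n}$ = span of images of all $V(f,g)$ with $(f,g):[m]\to[n]$, $m<n$); $H_i$ are the left derived functors of $H_0$; $hd_i(V)=\deg H_i(V)$. *)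

From HB Require Import structures.
From mathcomp Require Import all_boot all_order all_algebra.
Set Implicit Arguments. Unset Strict Implicit. Unset Printing Implicit Defensive.
Import GRing.Theory.
Local Open Scope ring_scope.

(* The category FI_G.  Objects: [n] = 'I_n.  A morphism [n] -> [m] is a     *)
(* pair (f, g) with f : 'I_n -> 'I_m injective and g : 'I_n -> G.          *)

Definition FIG_comp (G : groupType) (n m l : nat)
  (f : {ffun 'I_m -> 'I_l}) (g : {ffun 'I_m -> G})
  (f' : {ffun 'I_n -> 'I_m}) (g' : {ffun 'I_n -> G})
  : {ffun 'I_n -> 'I_l} * {ffun 'I_n -> G} :=
  ([ffun x => f (f' x)], [ffun x => monoid.mul (g' x) (g (f' x))]).

(* An FI_G-module over the commutative ring k: a functor FI_G -> Mod_k.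
   [act f g] is V(f,g); it is only meaningful (and only constrained) for
   injective f, i.e. for genuine morphisms of FI_G. *)
Record FIGmod (k : comPzRingType) (G : groupType) := FIGModule {
  FIGsp :> nat -> lmodType k;
  FIGact : forall n m, {ffun 'I_n -> 'I_m} -> {ffun 'I_n -> G} ->
             FIGsp n -> FIGsp m;
  FIGact_add : forall n m (f : {ffun 'I_n -> 'I_m}) (g : {ffun 'I_n -> G}) (x y : FIGsp n), injective f ->
      @FIGact n m f g (x + y) = FIGact f g x + FIGact f g y;
  FIGact_scale : forall n m (f : {ffun 'I_n -> 'I_m}) (g : {ffun 'I_n -> G}) (a : k) (x : FIGsp n), injective f ->
      @FIGact n m f g (a *: x) = a *: FIGact f g x;
  FIGact_id : forall n (x : FIGsp n),
      @FIGact n n [ffun i => i] [ffun=> monoid.one] x = x;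
  FIGact_comp : forall n m l (f : {ffun 'I_m -> 'I_l}) (g : {ffun 'I_m -> G})
      (f' : {ffun 'I_n -> 'I_m}) (g' : {ffun 'I_n -> G}) (x : FIGsp n),
      injective f -> injective f' ->
      @FIGact m l f g (@FIGact n m f' g' x) =
      FIGact (FIG_comp f g f' g').1 (FIG_comp f g f' g').2 x
}.

Arguments FIGact {k G} _ {n m}.

Record FIGhom (k : comPzRingType) (G : groupType) (V W : FIGmod k G) :=
  FIGHom {
  FIGfun :> forall n, V n -> W n;
  FIGfun_add : forall n (x y : V n), FIGfun (x + y) = FIGfun x + FIGfun y;
  FIGfun_scale : forall n (a : k) (x : V n), FIGfun (a *: x) = a *: FIGfun x;
  FIGfun_nat : forall n m (f : {ffun 'I_n -> 'I_m}) (g : {ffun 'I_n -> G}) (x : V n), injective f ->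
      FIGfun (FIGact V f g x) = FIGact W f g (FIGfun x)
}.

Definition FIGsurj k G (V W : FIGmod k G) (a : FIGhom V W) : Prop :=
  forall n (y : W n), exists x : V n, a n x = y.

Definition FIGprojective k G (P : FIGmod k G) : Prop :=
  forall (V W : FIGmod k G) (a : FIGhom V W) (b : FIGhom P W),
    FIGsurj a ->
    exists c : FIGhom P V, forall n (x : P n), a n (c n x) = b n x.

Definition FIGexact k G (U V W : FIGmod k G) (a : FIGhom U V) (b : FIGhom V W)
  : Prop :=
  forall n (x : V n), b n x = 0 <-> exists y : U n, a n y = x.

Record FIGprojres k G (V : FIGmod k G) := FIGProjRes {
  pr_obj : nat -> FIGmod k G;
  pr_d : forall i, FIGhom (pr_obj i.+1) (pr_obj i);
  pr_aug : FIGhom (pr_obj 0) V;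
  pr_proj : forall i, FIGprojective (pr_obj i);
  pr_aug_surj : FIGsurj pr_aug;
  pr_exact0 : FIGexact (pr_d 0) pr_aug;
  pr_exactS : forall i, FIGexact (pr_d i.+1) (pr_d i)
}.

Inductive FIGlower k G (V : FIGmod k G) (n : nat) : V n -> Prop :=
  | FIGlower_img : forall m (f : {ffun 'I_m -> 'I_n}) (g : {ffun 'I_m -> G})
        (x : V m), (m < n)%N -> injective f -> FIGlower (FIGact V f g x)
  | FIGlower_0 : FIGlower 0
  | FIGlower_add : forall x y, FIGlower x -> FIGlower y -> FIGlower (x + y)
  | FIGlower_scale : forall (a : k) x, FIGlower x -> FIGlower (a *: x).

(* H_0(V)_n = V_n / V_{<n}.  For a projective resolution P of V, the
   homology H_i(V) is the i-th homology of the complex H_0(P_.).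
   [FIGhomol_vanish R i n] says: the degree-n part of the i-th homology of
   H_0(P_.) is zero, i.e. every class x in H_0(P_i)_n with
   d(x) = 0 in H_0(P_{i-1})_n is the image of a class of H_0(P_{i+1})_n. *)
Definition FIGcycle0 k G (V : FIGmod k G) (R : FIGprojres V) (i n : nat)
  (x : pr_obj R i n) : Prop :=
  match i return pr_obj R i n -> Prop with
  | 0 => fun _ => True
  | i'.+1 => fun x => FIGlower (pr_d R i' n x)
  end x.

Definition FIGhomol_vanish k G (V : FIGmod k G) (R : FIGprojres V)
  (i n : nat) : Prop :=
  forall x : pr_obj R i n, FIGcycle0 x ->
    exists (y : pr_obj R i.+1 n) (z : pr_obj R i n),
      FIGlower z /\ x = pr_d R i n y + z.

(* Degrees with values in {-oo} u N, encoded as option nat (None = -oo). *)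
Definition leo (a b : option nat) : bool :=
  match a, b with
  | None, _ => true
  | Some _, None => false
  | Some x, Some y => (x <= y)%N
  end.

Definition addno (i : nat) (d : option nat) : option nat :=
  match d with None => None | Some e => Some (i + e)%N end.

Definition FIGdeg_is k G (V : FIGmod k G) (d : option nat) : Prop :=
  (forall n, (exists x : V n, x <> 0) -> leo (Some n) d) /\
  (forall e, (forall n, (exists x : V n, x <> 0) -> leo (Some n) e) -> leo d e).

Definition FIGhd_le k G (V : FIGmod k G) (R : FIGprojres V) (i : nat)
  (b : option nat) : Prop :=
  forall n, ~~ leo (Some n) b -> FIGhomol_vanish R i n.

From HB Require Import structures.
From mathcomp Require Import all_boot all_order all_algebra.
From mathcomp Require Import zify.
Set Implicit Arguments. Unset Strict Implicit. Unset Printing Implicit Defensive.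
Import GRing.Theory.
Local Open Scope ring_scope.

(* For an FI_G-module M and n >= 1 consider the Koszul-type complex
     0 -> M_0 -> (+)_{|S| = 1} M_1 -> ... -> (+)_{|S| = n} M_n = M_n,
   indexed by the subsets S of [n], with the alternating sum of the maps
   induced by the inclusions S \ u <= S as differential.  The image of its
   last differential is exactly M_{<n}.  When M is projective it is exact in
   every degree q with q + 1 < n: M is a retract of a sum of modules on which,
   after sorting the coordinates by index maps phi : [m] -> [n], the complex
   becomes a simplicial cochain complex contracted by coning off from a point
   outside the image of phi.
   Now let P be a projective resolution of V with V_s = 0, and put
   n = i + s.  Feeding a cycle of H_0(P_i)_n into the Koszul complexes of the
   P_j and chasing it down the double complex -- exact along the rows by the
   above, and along the columns since P is a resolution and V_s = 0 -- writes
   it as a boundary modulo (P_i)_{<n}.  So H_i(V)_n = 0 as soon as V_{n-i} = 0,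
   which gives hd_i(V) <= i + deg V; if V = 0 the resolution splits and all
   H_i vanish. *)

Section FIGmodTheory.
Variables (k : comPzRingType) (G : groupType).
Implicit Types (U V W : FIGmod k G).

Lemma FIGact0 V n m (f : {ffun 'I_n -> 'I_m}) g :
  injective f -> FIGact V f g 0 = 0.
Proof. by move=> fi; rewrite -(scale0r (0 : V n)) FIGact_scale // scale0r. Qed.

Lemma FIGact_sum V n m (f : {ffun 'I_n -> 'I_m}) g I (r : seq I) (P : pred I)
    (F : I -> V n) : injective f ->
  FIGact V f g (\sum_(i <- r | P i) F i) = \sum_(i <- r | P i) FIGact V f g (F i).
Proof.
move=> fi; apply: (big_morph (FIGact V f g)) => [x y|]; last exact: FIGact0.
exact: FIGact_add.
Qed.

Lemma FIGfun0 V W (h : FIGhom V W) n : h n 0 = 0.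
Proof. by rewrite -(scale0r (0 : V n)) FIGfun_scale scale0r. Qed.

Lemma FIGfunB V W (h : FIGhom V W) n (x y : V n) : h n (x - y) = h n x - h n y.
Proof. by rewrite FIGfun_add -scaleN1r FIGfun_scale scaleN1r. Qed.

Lemma FIGfun_sum V W (h : FIGhom V W) n I (r : seq I) (P : pred I) (F : I -> V n) :
  h n (\sum_(i <- r | P i) F i) = \sum_(i <- r | P i) h n (F i).
Proof. by apply: (big_morph (h n)) => [x y|]; rewrite ?FIGfun_add ?FIGfun0. Qed.

Lemma FIGlower_sum V n I (r : seq I) (P : pred I) (F : I -> V n) :
  (forall i, P i -> FIGlower (F i)) -> FIGlower (\sum_(i <- r | P i) F i).
Proof.
by move=> H; apply: big_ind => //; [apply: FIGlower_0 | apply: FIGlower_add].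
Qed.

Lemma FIGlower_hom V W (h : FIGhom V W) n (x : V n) :
  FIGlower x -> FIGlower (h n x).
Proof.
elim=> {x} [m f g x mn fi | | x y _ Hx _ Hy | a x _ Hx].
- by rewrite FIGfun_nat //; apply: FIGlower_img.
- by rewrite FIGfun0; apply: FIGlower_0.
- by rewrite FIGfun_add; apply: FIGlower_add.
- by rewrite FIGfun_scale; apply: FIGlower_scale.
Qed.

Definition FIGdsum_act V W n m (f : {ffun 'I_n -> 'I_m}) (g : {ffun 'I_n -> G})
  (x : (V n * W n)%type) : (V m * W m)%type :=
  (FIGact V f g x.1, FIGact W f g x.2).

Lemma FIGdsum_act_add V W n m (f : {ffun 'I_n -> 'I_m}) g (x y : (V n * W n)%type) :
  injective f -> FIGdsum_act f g (x + y) = FIGdsum_act f g x + FIGdsum_act f g y.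
Proof. by move=> fi; rewrite /FIGdsum_act /= !FIGact_add. Qed.

Lemma FIGdsum_act_scale V W n m (f : {ffun 'I_n -> 'I_m}) g a (x : (V n * W n)%type) :
  injective f -> FIGdsum_act f g (a *: x) = a *: FIGdsum_act f g x.
Proof. by move=> fi; rewrite /FIGdsum_act /= !FIGact_scale. Qed.

Lemma FIGdsum_act_id V W n (x : (V n * W n)%type) :
  FIGdsum_act [ffun i => i] [ffun=> 1%g] x = x.
Proof. by rewrite /FIGdsum_act !FIGact_id; case: x. Qed.

Lemma FIGdsum_act_comp V W n m l (f : {ffun 'I_m -> 'I_l}) g
    (f' : {ffun 'I_n -> 'I_m}) g' (x : (V n * W n)%type) :
  injective f -> injective f' ->
  FIGdsum_act f g (FIGdsum_act f' g' x) =
  FIGdsum_act (FIG_comp f g f' g').1 (FIG_comp f g f' g').2 x.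
Proof. by move=> fi fi'; rewrite /FIGdsum_act /= !FIGact_comp. Qed.

Definition FIGdsum V W : FIGmod k G :=
  @FIGModule k G (fun n => (V n * W n)%type) (@FIGdsum_act V W)
    (@FIGdsum_act_add V W) (@FIGdsum_act_scale V W)
    (@FIGdsum_act_id V W) (@FIGdsum_act_comp V W).

Definition FIGhom_id V : FIGhom V V := @FIGHom k G V V (fun n x => x)
  (fun _ _ _ => erefl) (fun _ _ _ => erefl) (fun _ _ _ _ _ _ => erefl).

Definition FIGhom_comp U V W (h1 : FIGhom V W) (h2 : FIGhom U V) : FIGhom U W.
Proof.
apply: (@FIGHom k G U W (fun n x => h1 n (h2 n x))).
- by move=> n x y; rewrite !FIGfun_add.
- by move=> n a x; rewrite !FIGfun_scale.
- by move=> n m f g x fi; rewrite !FIGfun_nat.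
Defined.

Definition FIGhom_sub V W (h1 h2 : FIGhom V W) : FIGhom V W.
Proof.
apply: (@FIGHom k G V W (fun n x => h1 n x - h2 n x)).
- by move=> n x y; rewrite !FIGfun_add addrACA opprD.
- by move=> n a x; rewrite !FIGfun_scale scalerBr.
- move=> n m f g x fi; rewrite !FIGfun_nat // -scaleN1r -FIGact_scale //.
  by rewrite -FIGact_add // scaleN1r.
Defined.

Definition FIGhom_copair U V W (h1 : FIGhom V U) (h2 : FIGhom W U) :
  FIGhom (FIGdsum V W) U.
Proof.
apply: (@FIGHom k G (FIGdsum V W) U (fun n x => h1 n x.1 + h2 n x.2)).
- by move=> n x y /=; rewrite !FIGfun_add addrACA.
- by move=> n a x /=; rewrite !FIGfun_scale scalerDr.
- by move=> n m f g x fi /=; rewrite !FIGfun_nat // FIGact_add.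
Defined.

Lemma FIGhom_copairE U V W (h1 : FIGhom V U) (h2 : FIGhom W U) n x y :
  FIGhom_copair h1 h2 n (x, y) = h1 n x + h2 n y.
Proof. by []. Qed.

Definition FIGhom_fst V W : FIGhom (FIGdsum V W) V :=
  @FIGHom k G (FIGdsum V W) V (fun n x => x.1)
    (fun _ _ _ => erefl) (fun _ _ _ => erefl) (fun _ _ _ _ _ _ => erefl).

Definition FIGhom_snd V W : FIGhom (FIGdsum V W) W :=
  @FIGHom k G (FIGdsum V W) W (fun n x => x.2)
    (fun _ _ _ => erefl) (fun _ _ _ => erefl) (fun _ _ _ _ _ _ => erefl).

Definition FIGhom_inl V W : FIGhom V (FIGdsum V W).
Proof.
apply: (@FIGHom k G V (FIGdsum V W) (fun n x => (x, 0))).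
- by move=> n x y /=; congr pair; rewrite addr0.
- by move=> n a x /=; congr pair; rewrite scaler0.
- by move=> n m f g x fi /=; rewrite /FIGdsum_act /= FIGact0.
Defined.

Definition FIGhom_inr V W : FIGhom W (FIGdsum V W).
Proof.
apply: (@FIGHom k G W (FIGdsum V W) (fun n x => (0, x))).
- by move=> n x y /=; congr pair; rewrite addr0.
- by move=> n a x /=; congr pair; rewrite scaler0.
- by move=> n m f g x fi /=; rewrite /FIGdsum_act /= FIGact0.
Defined.

End FIGmodTheory.

Section ZeroModule.
Variables (k : comPzRingType) (G : groupType) (V : FIGmod k G) (R : FIGprojres V).
Hypothesis V0 : forall n (v : V n), v = 0.

Lemma FIGres0_section j : exists s : FIGhom (pr_obj R j) (pr_obj R j.+1),
  forall n (y : pr_obj R j.+1 n), pr_d R j n (s n (pr_d R j n y)) = pr_d R j n y.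
Proof.
elim: j => [|j [s Hs]].
  have d0_surj : FIGsurj (pr_d R 0).
    by move=> n z; apply: (proj1 (pr_exact0 z)); apply: V0.
  have [c Hc] := @pr_proj _ _ _ R 0 _ _ (pr_d R 0) (FIGhom_id _) d0_surj.
  by exists c => n y; rewrite Hc.
(* Lift [id - s d] along the surjection (y, w) |-> d y + s (d w) onto P_(j+1). *)
set a := FIGhom_copair (pr_d R j.+1) (FIGhom_comp s (pr_d R j)).
have a_surj : FIGsurj a.
  move=> n w; have : pr_d R j n (w - s n (pr_d R j n w)) = 0.
    by rewrite FIGfunB Hs subrr.
  move/(proj1 (pr_exactS _)) => [y Hy].
  by exists (y, w); rewrite /= Hy subrK.
have [c Hc] := @pr_proj _ _ _ R j.+1 _ _ a
  (FIGhom_sub (FIGhom_id _) (FIGhom_comp s (pr_d R j))) a_surj.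
exists (FIGhom_comp (FIGhom_fst _ _) c) => n y /=.
set w := pr_d R j.+1 n y.
have dw : pr_d R j n w = 0 by apply: (proj2 (pr_exactS _)); exists y.
have := Hc n w; rewrite /= dw FIGfun0 subr0.
case: (c n w) => t u /= E.
have dsdu : pr_d R j n (s n (pr_d R j n u)) = 0.
  have := congr1 (pr_d R j n) E; rewrite FIGfun_add dw.
  have -> : pr_d R j n (pr_d R j.+1 n t) = 0.
    by apply: (proj2 (pr_exactS _)); exists t.
  by rewrite add0r.
by move: E; rewrite Hs in dsdu; rewrite dsdu FIGfun0 addr0.
Qed.

Lemma FIGhomol_vanish_res0 j n : FIGhomol_vanish R j.+1 n.
Proof.
move=> x dx; have [s Hs] := FIGres0_section j.
have : pr_d R j n (x - s n (pr_d R j n x)) = 0 by rewrite FIGfunB Hs subrr.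
move/(proj1 (pr_exactS _)) => [y Hy].
exists y, (s n (pr_d R j n x)); split; first exact: FIGlower_hom dx.
by rewrite Hy subrK.
Qed.

End ZeroModule.

Section SetDifferential.
Variables (k : pzRingType) (V : lmodType k) (n : nat).
Implicit Types (A : {set 'I_n}) (F : {set 'I_n} -> V).

Definition srank A (u : 'I_n) : nat := (\sum_(x in A) (x < u))%N.
Definition ssign A (u : 'I_n) : k := (-1) ^+ srank A u.

Lemma srankD1 A u v : u \in A -> srank A v = ((u < v) + srank (A :\ u) v)%N.
Proof. by move=> uA; rewrite /srank (big_setD1 u uA). Qed.

Lemma srankU1 A j v : j \notin A -> srank (j |: A) v = ((j < v) + srank A v)%N.
Proof. by move=> jA; rewrite (srankD1 _ (setU11 j A)) setU1K. Qed.

Lemma ssign_swap A u v : u \in A -> v \in A -> u != v ->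
  ssign A u * ssign (A :\ u) v = - (ssign A v * ssign (A :\ v) u).
Proof.
move=> uA vA uv; rewrite /ssign [srank A u](srankD1 _ vA) [srank A v](srankD1 _ uA).
case: (ltngtP u v) => [lt|lt|E]; last by move: uv; rewrite (val_inj E) eqxx.
- by rewrite /= -!exprD add0n add1n addSn exprS mulN1r opprK addnC.
- by rewrite /= -!exprD add0n add1n addSn exprS mulN1r addnC.
Qed.

Definition sdiff F A : V := \sum_(u in A) ssign A u *: F (A :\ u).

Definition scone (j : 'I_n) F A : V :=
  if j \notin A then ssign (j |: A) j *: F (j |: A) else 0.

Lemma eq_sdiff F F' A : (forall u, u \in A -> F (A :\ u) = F' (A :\ u)) ->
  sdiff F A = sdiff F' A.
Proof. by move=> E; apply: eq_bigr => u uA; rewrite E. Qed.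

Lemma sum_antisym0 (A : {set 'I_n}) (X : 'I_n -> 'I_n -> V) :
  (forall u v, u \in A -> v \in A -> u != v -> X u v = - X v u) ->
  \sum_(u in A) \sum_(v in A :\ u) X u v = 0.
Proof.
(* Not via S = - S, which is useless in characteristic 2: the terms with
   v < u cancel against those with u < v. *)
move=> Xanti.
have -> : \sum_(u in A) \sum_(v in A :\ u) X u v =
    \sum_u \sum_v (if [&& u \in A, v \in A & (v < u)%N] then X u v else 0) +
    \sum_u \sum_v (if [&& u \in A, v \in A & (u < v)%N] then X u v else 0).
  rewrite -big_split big_mkcond /=; apply: eq_bigr => u _; rewrite -big_split /=.
  case: (boolP (u \in A)) => uA /=; last by rewrite big1 // => v _; rewrite addr0.
  rewrite big_mkcond /=; apply: eq_bigr => v _; rewrite !inE.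
  case: (v \in A); rewrite ?andbF ?andbT /= ?addr0 //.
  case: (ltngtP v u) => [vu|uv|/val_inj ->]; rewrite /= ?addr0 ?add0r ?eqxx //.
  - by rewrite -(inj_eq val_inj) /= (ltn_eqF vu).
  - by rewrite -(inj_eq val_inj) /= (gtn_eqF uv).
rewrite [X in _ + X]exchange_big /= -big_split big1 // => u _.
rewrite -big_split big1 // => v _ /=.
case: (boolP (u \in A)) => uA; case: (boolP (v \in A)) => vA /=; rewrite ?addr0 //.
case: (ltnP v u) => vu; rewrite ?addr0 //.
by rewrite Xanti ?addNr // -(inj_eq val_inj) /= (gtn_eqF vu).
Qed.

Lemma sdiffK F A : sdiff (sdiff F) A = 0.
Proof.
rewrite /sdiff (eq_bigr (fun u => \sum_(v in A :\ u)
    (ssign A u * ssign (A :\ u) v) *: F (A :\ u :\ v))); last first.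
  by move=> u _; rewrite scaler_sumr; apply: eq_bigr => v _; rewrite scalerA.
apply: sum_antisym0 => u v uA vA uv.
by rewrite ssign_swap // scaleNr [A :\ u :\ v]setDDl [A :\ v :\ u]setDDl setUC.
Qed.

Lemma sdiff_scone (j : 'I_n) F A : sdiff (scone j F) A + scone j (sdiff F) A = F A.
Proof.
rewrite /sdiff /scone; case: (boolP (j \in A)) => jA /=.
  rewrite addr0 (bigD1 j jA) /= big1 ?addr0 => [|u /andP [uA uj]].
    by rewrite setD11 setD1K // signrZK.
  by rewrite !inE eq_sym uj jA /= scaler0.
rewrite (big_setU1 _ jA) /= setU1K // scalerDr signrZK addrCA scaler_sumr.
rewrite -big_split big1 ?addr0 //= => u uA.
have uj : u != j by apply: contraNneq jA => <-.
have jAu : j \notin A :\ u by rewrite !inE negb_and jA orbT.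
have -> : (j |: A) :\ u = j |: (A :\ u).
  by apply/setP => x; rewrite !inE; case: (eqVneq x j) => //= ->; rewrite eq_sym uj.
rewrite jAu !scalerA -scalerDl.
rewrite /ssign (srankU1 _ jAu) (srankU1 _ jA) (srankU1 _ jA) ltnn !add0n.
rewrite [srank A j](srankD1 _ uA) -!exprD.
case: (ltngtP u j) => [lt|lt|E]; last by move: uj; rewrite (val_inj E) eqxx.
- by rewrite add0n add1n addSn addnC exprS mulN1r addrN scale0r.
- by rewrite add0n add1n addnS addnC exprS mulN1r addrN scale0r.
Qed.

End SetDifferential.

Arguments ssign {k n} A u.

(** * Koszul complexes *)

Definition ksub n q := {S : {set 'I_n} | #|S| == q}.

Section KsubEmbedding.
Variable n : nat.

Definition kemb q (S : ksub n q) (i : 'I_q) : 'I_n :=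
  enum_val (cast_ord (esym (eqP (valP S))) i).

Lemma kembP q (S : ksub n q) i : kemb S i \in val S.
Proof. exact: enum_valP. Qed.

Lemma kemb_inj q (S : ksub n q) : injective (kemb S).
Proof. by move=> i j /enum_val_inj /cast_ord_inj. Qed.

Lemma kemb_ffun_inj q m (S : ksub n q) (f1 f2 : {ffun 'I_m -> 'I_q}) :
  (forall i, kemb S (f1 i) = kemb S (f2 i)) -> f1 = f2.
Proof. by move=> E; apply/ffunP => i; apply: kemb_inj. Qed.

Lemma kemb_nth q (S : ksub n q) (i : 'I_q) x0 : kemb S i = nth x0 (enum (val S)) i.
Proof. by rewrite /kemb (enum_val_nth x0). Qed.

Definition krank q (S : ksub n q) x (xS : x \in val S) : 'I_q :=
  cast_ord (eqP (valP S)) (enum_rank_in xS x).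

Lemma krankK q (S : ksub n q) x (xS : x \in val S) : kemb S (krank xS) = x.
Proof. by rewrite /kemb /krank cast_ordK enum_rankK_in. Qed.

(* The [ord0] default is only used when S is not contained in S'. *)
Definition kincl q p (S : ksub n q) (S' : ksub n p.+1) : {ffun 'I_q -> 'I_p.+1} :=
  [ffun i => insubd ord0 (index (kemb S i) (enum (val S')))].

Lemma kinclK q p (S : ksub n q) (S' : ksub n p.+1) i :
  val S \subset val S' -> kemb S' (kincl S S' i) = kemb S i.
Proof.
move=> sub; rewrite (kemb_nth _ _ (kemb S i)) ffunE.
have Hin : kemb S i \in enum (val S') by rewrite mem_enum (subsetP sub) ?kembP.
rewrite insubdK ?nth_index //.
by rewrite unfold_in /= -[ltnRHS](eqP (valP S')) cardE index_mem.
Qed.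

Lemma kincl_inj q p (S : ksub n q) (S' : ksub n p.+1) :
  val S \subset val S' -> injective (kincl S S').
Proof. by move=> sub i j E; apply: (@kemb_inj _ S); rewrite -!(kinclK _ sub) E. Qed.

Lemma kincl_comp q p r (S : ksub n q) (S' : ksub n p.+1) (S'' : ksub n r.+1) :
  val S \subset val S' -> val S' \subset val S'' ->
  [ffun i => kincl S' S'' (kincl S S' i)] = kincl S S''.
Proof.
move=> s1 s2; apply/ffunP => i; apply: (@kemb_inj _ S''); rewrite ffunE.
by rewrite !kinclK // (subset_trans s1 s2).
Qed.

Lemma ksub_full (S : ksub n n) : val S = setT.
Proof. by apply/eqP; rewrite eqEcard subsetT cardsT card_ord /= (eqP (valP S)). Qed.

Lemma kemb_full (S : ksub n n) (i : 'I_n) : kemb S i = i.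
Proof.
apply: val_inj; rewrite (kemb_nth _ _ i) ksub_full enum_setT -enumT /=.
by rewrite nth_enum_ord.
Qed.

End KsubEmbedding.

Section Koszul.
Variables (k : comPzRingType) (G : groupType).
Implicit Types (M : FIGmod k G).

Definition ones m : {ffun 'I_m -> G} := [ffun=> 1%g].

Lemma FIG_comp_kincl n q p r (S : ksub n q) (S' : ksub n p.+1) (S'' : ksub n r.+1) :
  val S \subset val S' -> val S' \subset val S'' ->
  FIG_comp (kincl S' S'') (ones p.+1) (kincl S S') (ones q) = (kincl S S'', ones q).
Proof.
move=> s1 s2; rewrite /FIG_comp kincl_comp //; congr pair.
by apply/ffunP => i; rewrite !ffunE mulg1.
Qed.

Definition koszul M n q := {ffun ksub n q -> M q}.

Definition kres M n q p (c : koszul M n q) (S : ksub n p.+1) (A : {set 'I_n}) : M p.+1 :=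
  if insub A is Some T then FIGact M (kincl T S) (ones q) (c T) else 0.

Definition kdiff M n q (c : koszul M n q) : koszul M n q.+1 :=
  [ffun S => sdiff (kres c S) (val S)].

Definition kmap M M' (h : FIGhom M M') n q (c : koszul M n q) : koszul M' n q :=
  [ffun S => h q (c S)].

Lemma kresE M n q p (c : koszul M n q) (S : ksub n p.+1) (T : ksub n q) :
  kres c S (val T) = FIGact M (kincl T S) (ones q) (c T).
Proof. by rewrite /kres valK. Qed.

Lemma kres_ind M n q p (c : koszul M n q) (S : ksub n p.+1)
    (A : {set 'I_n}) (P : M p.+1 -> Prop) :
  P 0 -> (forall T : ksub n q, val T = A -> P (FIGact M (kincl T S) (ones q) (c T))) ->
  P (kres c S A).
Proof. by move=> P0 PT; rewrite /kres; case: insubP => [T _ /PT|]. Qed.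

Lemma kresD M n q p (c1 c2 : koszul M n q) (S : ksub n p.+1) (A : {set 'I_n}) :
  A \subset val S ->
  kres (c1 + c2) S A = kres c1 S A + kres c2 S A.
Proof.
move=> AS; rewrite /kres; case: insubP => [T _ TA|]; last by rewrite addr0.
by rewrite ffunE FIGact_add //; apply: kincl_inj; rewrite TA.
Qed.

Lemma kresZ M n q p a (c : koszul M n q) (S : ksub n p.+1) (A : {set 'I_n}) :
  A \subset val S ->
  kres (a *: c) S A = a *: kres c S A.
Proof.
move=> AS; rewrite /kres; case: insubP => [T _ TA|]; last by rewrite scaler0.
by rewrite ffunE FIGact_scale //; apply: kincl_inj; rewrite TA.
Qed.

Lemma kmap_kres M M' (h : FIGhom M M') n q p (c : koszul M n q) (S : ksub n p.+1)
    (A : {set 'I_n}) :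
  A \subset val S -> h p.+1 (kres c S A) = kres (kmap h c) S A.
Proof.
move=> AS; rewrite /kres; case: insubP => [T _ TA|]; last by rewrite FIGfun0.
by rewrite ffunE FIGfun_nat //; apply: kincl_inj; rewrite TA.
Qed.

Lemma kdiffD M n q (c1 c2 : koszul M n q) : kdiff (c1 + c2) = kdiff c1 + kdiff c2.
Proof.
apply/ffunP => S; rewrite !ffunE /sdiff -big_split; apply: eq_bigr => u _.
by rewrite kresD ?subD1set // scalerDr.
Qed.

Lemma kdiffZ M n q a (c : koszul M n q) : kdiff (a *: c) = a *: kdiff c.
Proof.
apply/ffunP => S; rewrite !ffunE /sdiff scaler_sumr; apply: eq_bigr => u _.
by rewrite kresZ ?subD1set // !scalerA mulrC.
Qed.

Lemma kdiff0 M n q : kdiff (0 : koszul M n q) = 0.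
Proof. by rewrite -(scale0r (0 : koszul M n q)) kdiffZ scale0r. Qed.

Lemma kdiffB M n q (c1 c2 : koszul M n q) : kdiff (c1 - c2) = kdiff c1 - kdiff c2.
Proof. by rewrite kdiffD -scaleN1r kdiffZ scaleN1r. Qed.

Lemma kmapB M M' (h : FIGhom M M') n q (c1 c2 : koszul M n q) :
  kmap h (c1 - c2) = kmap h c1 - kmap h c2.
Proof. by apply/ffunP => S; rewrite !ffunE FIGfunB. Qed.

Lemma kmap0 M M' (h : FIGhom M M') n q : kmap h (0 : koszul M n q) = 0.
Proof. by apply/ffunP => S; rewrite !ffunE FIGfun0. Qed.

Lemma kmap_kdiff M M' (h : FIGhom M M') n q (c : koszul M n q) :
  kmap h (kdiff c) = kdiff (kmap h c).
Proof.
apply/ffunP => S; rewrite !ffunE FIGfun_sum; apply: eq_bigr => u _.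
by rewrite FIGfun_scale kmap_kres ?subD1set.
Qed.

Lemma kres_trans M n q p r (c : koszul M n q) (T : ksub n p.+1) (R : ksub n r.+1)
    (B : {set 'I_n}) :
  B \subset val T -> val T \subset val R ->
  FIGact M (kincl T R) (ones p.+1) (kres c T B) = kres c R B.
Proof.
move=> BT TR; rewrite /kres; case: insubP => [S _ SB|]; last first.
  by rewrite FIGact0 //; apply: kincl_inj.
rewrite FIGact_comp; first by rewrite FIG_comp_kincl ?SB.
- exact: kincl_inj.
- by apply: kincl_inj; rewrite SB.
Qed.

Lemma kres_kdiff M n q r (c : koszul M n q) (R : ksub n r.+1) (A : {set 'I_n}) :
  A \subset val R -> #|A| = q.+1 -> kres (kdiff c) R A = sdiff (kres c R) A.
Proof.
move=> AR /eqP cA; have -> : A = val (Sub A cA : ksub n q.+1) by rewrite SubK.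
rewrite kresE ffunE FIGact_sum; last by apply: kincl_inj; rewrite SubK.
apply: eq_bigr => u uA; rewrite FIGact_scale ?kres_trans ?SubK ?subD1set //.
by apply: kincl_inj; rewrite SubK.
Qed.

Lemma kdiffK M n q (c : koszul M n q) : kdiff (kdiff c) = 0.
Proof.
apply/ffunP => R; rewrite !ffunE -[RHS](sdiffK (kres c R) (val R)).
apply: eq_sdiff => u uR; rewrite kres_kdiff ?subD1set //.
by have := cardsD1 u (val R); rewrite uR (eqP (valP R)) add1n => -[].
Qed.

Lemma kdiff_lower M n q (c : koszul M n q) S : FIGlower (kdiff c S).
Proof.
rewrite ffunE; apply: FIGlower_sum => u _; apply: FIGlower_scale.
apply: kres_ind => [|T TS]; first exact: FIGlower_0.
by apply: FIGlower_img => //; apply: kincl_inj; rewrite TS subD1set.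
Qed.

End Koszul.

Lemma codom_ord_proper m n (f : 'I_m -> 'I_n) : (m < n)%N -> exists j, j \notin codom f.
Proof.
move=> mn; apply/existsP; apply: contraTT mn => /existsPn all_in; rewrite -leqNgt.
rewrite -[n in (n <= _)%N]card_ord -[m in (_ <= m)%N]card_ord -(size_codom f).
apply: leq_trans (card_size _); apply/subset_leq_card/subsetP => z _.
by have := all_in z; rewrite negbK.
Qed.

Section KoszulTop.
Variables (k : comPzRingType) (G : groupType) (M : FIGmod k G).

Definition ksingle n q (T : ksub n q) (y : M q) : koszul M n q :=
  [ffun T' => if T' == T then y else 0].

Lemma kdiff_ksingle n q (T : ksub n q) y (R : ksub n q.+1) u :
  u \in val R -> val T = val R :\ u ->
  kdiff (ksingle T y) R = ssign (val R) u *: FIGact M (kincl T R) (ones G q) y.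
Proof.
move=> uR TR; rewrite ffunE /sdiff (bigD1 u uR) /= -TR kresE ffunE eqxx.
rewrite big1 ?addr0 // => v /andP [vR vu].
apply: (kres_ind (P := fun z => ssign _ v *: z = 0)) => [|T' T'R]; first by rewrite scaler0.
rewrite ffunE; case: eqP => [ET'|_]; last first.
  by rewrite FIGact0 ?scaler0 //; apply: kincl_inj; rewrite T'R subD1set.
move: T'R; rewrite ET' TR => /setP /(_ u); rewrite !inE eqxx uR andbT /=.
by rewrite andbT eq_sym vu.
Qed.

Lemma FIGlower_kdiff N (y : M N.+1) :
  FIGlower y -> exists w : koszul M N.+1 N, kdiff w = [ffun=> y].
Proof.
elim=> {y} [m f g x mN fi | | x y _ [w1 E1] _ [w2 E2] | a x _ [w E]].
- have [j jf] := codom_ord_proper f mN.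
  have cS0 : #|[set: 'I_N.+1] :\ j| == N.
    by have := cardsD1 j [set: 'I_N.+1]; rewrite in_setT cardsT card_ord add1n => -[<-].
  pose S0 : ksub N.+1 N := Sub ([set: 'I_N.+1] :\ j) cS0.
  have fS0 i : f i \in val S0.
    by rewrite SubK !inE andbT; apply: contraNneq jf => <-; apply: codom_f.
  pose f' := [ffun i => krank (fS0 i)].
  exists (ksingle S0 (ssign setT j *: FIGact M f' g x)).
  apply/ffunP => R; rewrite [RHS]ffunE.
  have S0R : val S0 = val R :\ j by rewrite SubK ksub_full.
  have S0R_inj : injective (kincl S0 R) by apply: kincl_inj; rewrite S0R subD1set.
  rewrite (kdiff_ksingle _ _ S0R) ?ksub_full ?in_setT // FIGact_scale // signrZK.
  rewrite FIGact_comp //; last first.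
    by move=> a b; rewrite !ffunE => /(congr1 (kemb S0)); rewrite !krankK => /fi.
  rewrite /FIG_comp /=; congr FIGact; apply/ffunP => i; last by rewrite !ffunE mulg1.
  rewrite ffunE; apply: (@kemb_inj _ _ R).
  by rewrite kinclK ?ffunE ?krankK ?kemb_full // S0R subD1set.
- by exists 0; rewrite kdiff0; apply/ffunP => R; rewrite !ffunE.
- by exists (w1 + w2); rewrite kdiffD E1 E2; apply/ffunP => R; rewrite !ffunE.
- by exists (a *: w); rewrite kdiffZ E; apply/ffunP => R; rewrite !ffunE.
Qed.

End KoszulTop.

(** * Exactness for projective modules *)

Lemma big_fibers (I J : finType) (V : nmodType) (h : I -> J) (P : pred J) (F : I -> V) :
  \sum_(j | P j) \sum_(i | h i == j) F i = \sum_(i | P (h i)) F i.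
Proof.
rewrite (partition_big h P) //; apply: eq_bigr => j Pj.
by apply: eq_bigl => i; case: eqP => [->|]; rewrite ?Pj ?andbF.
Qed.

Definition ffcomp m r (T : Type) (h : {ffun 'I_r -> T}) (f : {ffun 'I_m -> 'I_r}) :
  {ffun 'I_m -> T} := [ffun i => h (f i)].

Section Cover.
Variables (k : comPzRingType) (G : groupType) (P : FIGmod k G) (m : nat).

Local Notation idm := ([ffun i => i] : {ffun 'I_m -> 'I_m}).

Lemma idm_inj : injective idm.
Proof. by move=> a b; rewrite !ffunE. Qed.
Local Hint Resolve idm_inj : core.

Lemma FIGact_idm_comp (a b : {ffun 'I_m -> G}) (x : P m) :
  FIGact P idm a (FIGact P idm b x) = FIGact P idm [ffun i => (b i * a i)%g] x.
Proof.
by rewrite FIGact_comp //; congr FIGact; apply/ffunP => i; rewrite !ffunE.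
Qed.

(* In degree r, one copy of P_m for every map [m] -> [r], injective or not,
   so that post-composition with any (f, g) is a well-defined reindexing. *)
Definition FIGcover_sp (r : nat) : lmodType k := {ffun {ffun 'I_m -> 'I_r} -> P m}.

Definition FIGcover_act r r' (h : {ffun 'I_r -> 'I_r'}) (g : {ffun 'I_r -> G})
    (c : FIGcover_sp r) : FIGcover_sp r' :=
  [ffun f' => \sum_(f | ffcomp h f == f') FIGact P idm (ffcomp g f) (c f)].

Lemma FIGcover_act_add r r' (h : {ffun 'I_r -> 'I_r'}) g (x y : FIGcover_sp r) :
  injective h -> FIGcover_act h g (x + y) = FIGcover_act h g x + FIGcover_act h g y.
Proof.
move=> _; apply/ffunP => f'; rewrite !ffunE -big_split; apply: eq_bigr => f _.
by rewrite ffunE FIGact_add.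
Qed.

Lemma FIGcover_act_scale r r' (h : {ffun 'I_r -> 'I_r'}) g a (x : FIGcover_sp r) :
  injective h -> FIGcover_act h g (a *: x) = a *: FIGcover_act h g x.
Proof.
move=> _; apply/ffunP => f'; rewrite !ffunE scaler_sumr; apply: eq_bigr => f _.
by rewrite ffunE FIGact_scale.
Qed.

Lemma FIGcover_act_id r (x : FIGcover_sp r) : FIGcover_act [ffun i => i] [ffun=> 1%g] x = x.
Proof.
apply/ffunP => f'; rewrite ffunE (big_pred1 f') => [|f]; last first.
  by congr (_ == _); apply/ffunP => i; rewrite !ffunE.
rewrite -[RHS]FIGact_id; congr FIGact; apply/ffunP => i; by rewrite !ffunE.
Qed.

Lemma FIGcover_act_comp r r' r'' (h2 : {ffun 'I_r' -> 'I_r''}) g2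
    (h1 : {ffun 'I_r -> 'I_r'}) g1 (x : FIGcover_sp r) : injective h2 -> injective h1 ->
  FIGcover_act h2 g2 (FIGcover_act h1 g1 x) =
  FIGcover_act (FIG_comp h2 g2 h1 g1).1 (FIG_comp h2 g2 h1 g1).2 x.
Proof.
move=> _ _; apply/ffunP => f''; rewrite !ffunE.
under eq_bigr => f' _ do rewrite ffunE FIGact_sum //.
rewrite (eq_bigr (fun f' => \sum_(f | ffcomp h1 f == f')
   FIGact P idm (ffcomp g2 (ffcomp h1 f)) (FIGact P idm (ffcomp g1 f) (x f)))); last first.
  by move=> f' _; apply: eq_bigr => f /eqP ->.
rewrite (big_fibers (ffcomp h1) (fun f' => ffcomp h2 f' == f'')).
apply: eq_big => [f|f _]; first by congr (_ == _); apply/ffunP => i; rewrite !ffunE.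
by rewrite FIGact_idm_comp; congr FIGact; apply/ffunP => i; rewrite !ffunE.
Qed.

Definition FIGcover : FIGmod k G :=
  @FIGModule k G FIGcover_sp (@FIGcover_act) (@FIGcover_act_add) (@FIGcover_act_scale)
    (@FIGcover_act_id) (@FIGcover_act_comp).

Definition FIGcover_aug_fun r (c : FIGcover r) : P r :=
  \sum_(f : {ffun 'I_m -> 'I_r} | injectiveb f) FIGact P f (ones G m) (c f).

Lemma FIGcover_aug_nat r r' (h : {ffun 'I_r -> 'I_r'}) g (c : FIGcover r) : injective h ->
  FIGcover_aug_fun (FIGact FIGcover h g c) = FIGact P h g (FIGcover_aug_fun c).
Proof.
move=> hi; rewrite /FIGcover_aug_fun FIGact_sum //=.
under eq_bigr => f' /injectiveP f'i do rewrite ffunE FIGact_sum //.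
rewrite (eq_bigr (fun f' => \sum_(f | ffcomp h f == f')
   FIGact P (ffcomp h f) (ones G m) (FIGact P idm (ffcomp g f) (c f)))); last first.
  by move=> f' _; apply: eq_bigr => f /eqP ->.
rewrite (big_fibers (ffcomp h) (fun f' => injectiveb f')).
apply: eq_big => [f|f /injectiveP fhi].
  apply/injectiveP/injectiveP => fi a b; first by move=> E; apply: fi; rewrite !ffunE E.
  by rewrite !ffunE => /hi /fi.
have fi : injective f by move=> a b E; apply: fhi; rewrite !ffunE E.
rewrite !FIGact_comp //.
by congr FIGact; apply/ffunP => i; rewrite !ffunE ?mulg1 ?mul1g.
Qed.

Definition FIGcover_aug : FIGhom FIGcover P.
Proof.
apply: (@FIGHom k G FIGcover P FIGcover_aug_fun).
- move=> r x y; rewrite /FIGcover_aug_fun -big_split; apply: eq_bigr => f /injectiveP fi.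
  by rewrite ffunE FIGact_add.
- move=> r a x; rewrite /FIGcover_aug_fun scaler_sumr; apply: eq_bigr => f /injectiveP fi.
  by rewrite ffunE FIGact_scale.
- by move=> r r' h g x hi; rewrite FIGcover_aug_nat.
Defined.

Lemma FIGcover_aug_surj (y : P m) : exists c : FIGcover m, FIGcover_aug m c = y.
Proof.
exists [ffun f => if f == idm then y else 0].
rewrite /= /FIGcover_aug_fun (bigD1 idm) /=; last by apply/injectiveP; apply: idm_inj.
rewrite ffunE eqxx FIGact_id big1 ?addr0 // => f /andP [/injectiveP fi fn].
by rewrite ffunE (negbTE fn) FIGact0.
Qed.

End Cover.

Section CoverSlices.
Variables (k : comPzRingType) (G : groupType) (P : FIGmod k G) (m : nat).
Local Notation E := (FIGcover P m).

(* Splitting a cochain of the cover by the composite index map phi : [m] -> [n]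
   turns the Koszul differential into the simplicial one [sdiff]. *)
Definition kslice n q (c : koszul E n q) (phi : {ffun 'I_m -> 'I_n}) (A : {set 'I_n}) :=
  if insub A is Some T then
    \sum_(f : {ffun 'I_m -> 'I_q} | [ffun i => kemb T (f i)] == phi) c T f
  else 0.

Lemma ksliceE n q (c : koszul E n q) phi (T : ksub n q) :
  kslice c phi (val T) =
  \sum_(f : {ffun 'I_m -> 'I_q} | [ffun i => kemb T (f i)] == phi) c T f.
Proof. by rewrite /kslice valK. Qed.

Lemma kslice_point n q (c : koszul E n q) (T : ksub n q) f :
  c T f = kslice c [ffun i => kemb T (f i)] (val T).
Proof.
rewrite ksliceE (big_pred1 f) // => f1; apply/eqP/eqP => [E|-> //].
by apply: (kemb_ffun_inj (S := T)) => i; move/ffunP: E => /(_ i); rewrite !ffunE.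
Qed.

Lemma kslice_notin n q (c : koszul E n q) (phi : {ffun 'I_m -> 'I_n})
    (A : {set 'I_n}) i :
  phi i \notin A -> kslice c phi A = 0.
Proof.
move=> phiA; rewrite /kslice; case: insubP => // T _ TA.
rewrite big_pred0 // => f; apply/negbTE; apply: contraNneq phiA => <-.
by rewrite ffunE -TA kembP.
Qed.

Lemma kslice0 n q (phi : {ffun 'I_m -> 'I_n}) (A : {set 'I_n}) :
  kslice (0 : koszul E n q) phi A = 0.
Proof.
by rewrite /kslice; case: insubP => // T _ _; rewrite big1 // => f _; rewrite !ffunE.
Qed.

Lemma kslice_kres n q (c : koszul E n q) (S : ksub n q.+1) phi (A : {set 'I_n}) :
  A \subset val S ->
  \sum_(f' : {ffun 'I_m -> 'I_q.+1} | [ffun i => kemb S (f' i)] == phi) kres c S A f' =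
  kslice c phi A.
Proof.
move=> AS; rewrite /kres /kslice; case: insubP => [T _ TA|_]; last first.
  by rewrite big1 // => f' _; rewrite ffunE.
have TS : val T \subset val S by rewrite TA.
under eq_bigr => f' _ do rewrite /= ffunE.
rewrite (eq_bigr (fun f' => \sum_(f | ffcomp (kincl T S) f == f') c T f)); last first.
  move=> f' _; apply: eq_bigr => f _; rewrite -[RHS]FIGact_id.
  by congr FIGact; apply/ffunP => i; rewrite !ffunE.
rewrite (big_fibers (ffcomp (kincl T S)) (fun f' => [ffun i => kemb S (f' i)] == phi)).
apply: eq_bigl => f; congr (_ == _); apply/ffunP => i.
by move: (kinclK (f i) TS); rewrite !ffunE.
Qed.

Lemma kslice_kdiff n q (c : koszul E n q) (S : ksub n q.+1) phi :
  kslice (kdiff c) phi (val S) = sdiff (kslice c phi) (val S).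
Proof.
rewrite ksliceE /sdiff.
under eq_bigr => f' _ do rewrite ffunE sum_ffunE.
rewrite exchange_big /=; apply: eq_bigr => u _.
under eq_bigr => f' _ do rewrite ffunE.
by rewrite -scaler_sumr kslice_kres ?subD1set.
Qed.

End CoverSlices.

Definition koszul_exact (k : comPzRingType) (G : groupType) (M : FIGmod k G) n q :=
  forall c : koszul M n q.+1, kdiff c = 0 -> exists e : koszul M n q, kdiff e = c.

Section CoverCone.
Variables (k : comPzRingType) (G : groupType) (P : FIGmod k G) (m n q : nat).
Local Notation E := (FIGcover P m).
Variable c : koszul E n q.+1.

(* Slice by slice, [kcone] cones [kslice c phi] off from a point outside the
   image of phi; when phi is onto, every slice of c vanishes anyway. *)
Definition kcone_fun (phi : {ffun 'I_m -> 'I_n}) (A : {set 'I_n}) : P m :=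
  if [pick j | j \notin codom phi] is Some j then scone j (kslice c phi) A else 0.

Definition kcone : koszul E n q :=
  [ffun T => [ffun f : {ffun 'I_m -> 'I_q} => kcone_fun [ffun i => kemb T (f i)] (val T)]].

Lemma kslice_kcone phi (T : ksub n q) : kslice kcone phi (val T) = kcone_fun phi (val T).
Proof.
rewrite ksliceE; case: (boolP [forall i, phi i \in val T]) => [/forallP phiT|].
  pose f1 := [ffun i => krank (phiT i)].
  have Ef1 : [ffun i => kemb T (f1 i)] = phi by apply/ffunP => i; rewrite !ffunE krankK.
  rewrite (big_pred1 f1) => [|f]; first by rewrite ffunE ffunE Ef1.
  apply/eqP/eqP => [Ef|-> //]; apply: (kemb_ffun_inj (S := T)) => i.
  by move/ffunP: Ef => /(_ i); rewrite -Ef1 !ffunE.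
move/forallPn => [i phiT]; rewrite big_pred0 => [|f]; last first.
  by apply/negbTE; apply: contraNneq phiT => <-; rewrite ffunE kembP.
rewrite /kcone_fun /scone; case: pickP => // j /= jphi; case: ifP => // jT.
rewrite (kslice_notin _ (i := i)) ?scaler0 // !inE negb_or phiT andbT.
by apply: contraNneq jphi => <-; apply: codom_f.
Qed.

Lemma sdiff_kslice_kcone (S : ksub n q.+1) phi : (q.+1 < n)%N -> kdiff c = 0 ->
  sdiff (kslice kcone phi) (val S) = kslice c phi (val S).
Proof.
move=> qn dc; rewrite (eq_sdiff (F' := kcone_fun phi)) => [|u uS]; last first.
  have cSu : #|val S :\ u| == q.
    by have := cardsD1 u (val S); rewrite uS (eqP (valP S)) add1n => -[<-].
  have -> : val S :\ u = val (Sub (val S :\ u) cSu : ksub n q) by rewrite SubK.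
  exact: kslice_kcone.
rewrite /kcone_fun; case: pickP => [j _ | onto].
  rewrite -[RHS](sdiff_scone j) -[LHS]addr0; congr (_ + _); rewrite /scone.
  case: ifP => // jS; have cS2 : #|j |: val S| == q.+2.
    by rewrite cardsU1 jS (eqP (valP S)).
  have -> : j |: val S = val (Sub (j |: val S) cS2 : ksub n q.+2) by rewrite SubK.
  by rewrite -kslice_kdiff dc kslice0 scaler0.
have [x xS] : exists x, x \notin val S.
  apply/existsP; rewrite -negb_forall; apply: contraTN qn => /forallP allS.
  by rewrite -leqNgt -(eqP (valP S)) -{1}(card_ord n); apply/subset_leq_card/subsetP.
have [i xE] := codomP (negbFE (onto x)).
rewrite (kslice_notin _ (i := i)) -?xE // /sdiff big1 // => u _.
by rewrite scaler0.
Qed.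

Lemma koszul_exact_cover : (q.+1 < n)%N -> kdiff c = 0 -> kdiff kcone = c.
Proof.
move=> qn dc; apply/ffunP => S; apply/ffunP => f.
by rewrite [RHS]kslice_point kslice_point kslice_kdiff sdiff_kslice_kcone.
Qed.

End CoverCone.

Section KoszulExact.
Variables (k : comPzRingType) (G : groupType).
Implicit Types (M : FIGmod k G).

Lemma koszul_exact_retract M M' (a : FIGhom M M') (s : FIGhom M' M) n q :
  (forall r x, a r (s r x) = x) -> koszul_exact M n q -> koszul_exact M' n q.
Proof.
move=> sK exM c dc.
have [|e de] := exM (kmap s c); first by rewrite -kmap_kdiff dc kmap0.
by exists (kmap a e); rewrite -kmap_kdiff de; apply/ffunP => S; rewrite !ffunE sK.
Qed.

Lemma koszul_exact_dsum M M' n q :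
  koszul_exact M n q -> koszul_exact M' n q -> koszul_exact (FIGdsum M M') n q.
Proof.
move=> exM exM' c dc.
have [|e1 de1] := exM (kmap (FIGhom_fst M M') c); first by rewrite -kmap_kdiff dc kmap0.
have [|e2 de2] := exM' (kmap (FIGhom_snd M M') c); first by rewrite -kmap_kdiff dc kmap0.
exists (kmap (FIGhom_inl M M') e1 + kmap (FIGhom_inr M M') e2).
rewrite kdiffD -!kmap_kdiff de1 de2; apply/ffunP => S; rewrite !ffunE /=.
by case: (c S) => x y; congr pair; rewrite /= ?addr0 ?add0r.
Qed.

Variable P : FIGmod k G.

Fixpoint FIGcovers (N : nat) : FIGmod k G :=
  if N is N'.+1 then FIGdsum (FIGcovers N') (FIGcover P N'.+1) else FIGcover P 0.

Fixpoint FIGcovers_aug (N : nat) : FIGhom (FIGcovers N) P :=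
  if N is N'.+1 return FIGhom (FIGcovers N) P
  then FIGhom_copair (FIGcovers_aug N') (FIGcover_aug P N'.+1)
  else FIGcover_aug P 0.

Lemma FIGcovers_aug_surj N r (y : P r) : (r <= N)%N ->
  exists e, FIGcovers_aug N r e = y.
Proof.
elim: N => [|N IH] rN.
  by move: y; rewrite (eqP (_ : r == 0)) -?leqn0 // => y; apply: FIGcover_aug_surj.
case: (leqP r N) => [rN'|Nr].
  by have [e <-] := IH rN'; exists (e, 0); rewrite FIGhom_copairE FIGfun0 addr0.
have Er : r = N.+1 by apply/eqP; rewrite eqn_leq rN Nr.
subst r; have [c <-] := FIGcover_aug_surj y.
by exists (0, c); rewrite FIGhom_copairE FIGfun0 add0r.
Qed.

Lemma koszul_exact_covers N n q : (q.+1 < n)%N -> koszul_exact (FIGcovers N) n q.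
Proof.
move=> qn; elim: N => [|N IH] c dc; first by exists (kcone c); exact: koszul_exact_cover.
by apply: koszul_exact_dsum dc => // c' dc'; exists (kcone c'); exact: koszul_exact_cover.
Qed.

Variable N : nat.

(* r - N copies of P_r, hence zero in degrees r <= N; the copies are there
   only so that the index types nest, 'I_(r - N) <= 'I_(r' - N) for r <= r'. *)
Definition FIGtail_sp (r : nat) : lmodType k := {ffun 'I_(r - N) -> P r}.

Definition FIGtail_act r r' (h : {ffun 'I_r -> 'I_r'}) (g : {ffun 'I_r -> G})
    (x : FIGtail_sp r) : FIGtail_sp r' :=
  [ffun t' : 'I_(r' - N) => \sum_(t : 'I_(r - N) | val t == val t') FIGact P h g (x t)].

Lemma FIGtail_act_add r r' (h : {ffun 'I_r -> 'I_r'}) g (x y : FIGtail_sp r) :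
  injective h -> FIGtail_act h g (x + y) = FIGtail_act h g x + FIGtail_act h g y.
Proof.
move=> hi; apply/ffunP => t'; rewrite !ffunE -big_split; apply: eq_bigr => t _.
by rewrite ffunE FIGact_add.
Qed.

Lemma FIGtail_act_scale r r' (h : {ffun 'I_r -> 'I_r'}) g a (x : FIGtail_sp r) :
  injective h -> FIGtail_act h g (a *: x) = a *: FIGtail_act h g x.
Proof.
move=> hi; apply/ffunP => t'; rewrite !ffunE scaler_sumr; apply: eq_bigr => t _.
by rewrite ffunE FIGact_scale.
Qed.

Lemma FIGtail_act_id r (x : FIGtail_sp r) : FIGtail_act [ffun i => i] [ffun=> 1%g] x = x.
Proof. by apply/ffunP => t'; rewrite ffunE (big_pred1 t') ?FIGact_id. Qed.

Lemma ord_inj_leq a b (h : 'I_a -> 'I_b) : injective h -> (a <= b)%N.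
Proof. by move=> hi; have := leq_card h hi; rewrite !card_ord. Qed.

Lemma big_ord_widen_val a b c (V : nmodType) (F : 'I_a -> V) (t'' : 'I_c) : (a <= b)%N ->
  \sum_(t' : 'I_b | val t' == val t'') \sum_(t : 'I_a | val t == val t') F t =
  \sum_(t : 'I_a | val t == val t'') F t.
Proof.
move=> ab; under eq_bigr => t' _ do
  under eq_bigl => t do rewrite -[val t]/(val (widen_ord ab t)) val_eqE.
exact: (big_fibers (widen_ord ab) (fun t' : 'I_b => val t' == val t'')).
Qed.

Lemma FIGtail_act_comp r r' r'' (h2 : {ffun 'I_r' -> 'I_r''}) g2
    (h1 : {ffun 'I_r -> 'I_r'}) g1 (x : FIGtail_sp r) : injective h2 -> injective h1 ->
  FIGtail_act h2 g2 (FIGtail_act h1 g1 x) =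
  FIGtail_act (FIG_comp h2 g2 h1 g1).1 (FIG_comp h2 g2 h1 g1).2 x.
Proof.
move=> h2i h1i; apply/ffunP => t''; rewrite !ffunE.
under eq_bigr => t' _ do rewrite ffunE FIGact_sum //.
rewrite big_ord_widen_val ?leq_sub2r ?(ord_inj_leq h1i) //.
by apply: eq_bigr => t _; rewrite FIGact_comp.
Qed.

Definition FIGtail : FIGmod k G :=
  @FIGModule k G FIGtail_sp (@FIGtail_act) (@FIGtail_act_add) (@FIGtail_act_scale)
    (@FIGtail_act_id) (@FIGtail_act_comp).

Definition FIGtail_aug_fun r (x : FIGtail r) : P r :=
  \sum_(t : 'I_(r - N) | val t == 0%N) x t.

Definition FIGtail_aug : FIGhom FIGtail P.
Proof.
apply: (@FIGHom k G FIGtail P FIGtail_aug_fun).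
- by move=> r x y; rewrite -big_split; apply: eq_bigr => t _; rewrite ffunE.
- by move=> r a x; rewrite scaler_sumr; apply: eq_bigr => t _; rewrite ffunE.
- move=> r r' h g x hi; rewrite /FIGtail_aug_fun FIGact_sum //=.
  under eq_bigr => t' _ do rewrite ffunE.
  exact/(@big_ord_widen_val _ _ 1 _ _ ord0)/leq_sub2r/(ord_inj_leq hi).
Defined.

Lemma FIGtail_aug_surj r (y : P r) : (N < r)%N -> exists x : FIGtail r, FIGtail_aug r x = y.
Proof.
move=> Nr; exists [ffun=> y]; rewrite /= /FIGtail_aug_fun.
have t0 : (0 < r - N)%N by rewrite subn_gt0.
by rewrite (big_pred1 (Ordinal t0)) ?ffunE.
Qed.

Lemma koszul_exact_tail n q : (q.+1 <= N)%N -> koszul_exact FIGtail n q.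
Proof.
move=> qN c _; exists 0; rewrite kdiff0; apply/ffunP => S; apply/ffunP => -[t tN].
by exfalso; move: tN; lia.
Qed.

End KoszulExact.

Lemma koszul_exact_projective (k : comPzRingType) (G : groupType) (Q : FIGmod k G) n q :
  FIGprojective Q -> (q.+1 < n)%N -> koszul_exact Q n q.
Proof.
move=> projQ qn.
pose a := FIGhom_copair (FIGcovers_aug Q n) (FIGtail_aug Q n).
have a_surj : FIGsurj a.
  move=> r y; case: (leqP r n) => [rn|nr].
    have [e <-] := FIGcovers_aug_surj y rn.
    by exists (e, 0); rewrite FIGhom_copairE FIGfun0 addr0.
  have [x <-] := FIGtail_aug_surj y nr.
  by exists (0, x); rewrite FIGhom_copairE FIGfun0 add0r.
have [s sK] := projQ _ _ a (FIGhom_id Q) a_surj.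
apply: (koszul_exact_retract sK); apply: koszul_exact_dsum.
  exact: koszul_exact_covers.
exact/koszul_exact_tail/ltnW.
Qed.

(** * The chase along a projective resolution *)

Lemma kmap_exact (k : comPzRingType) (G : groupType) (U W Y : FIGmod k G)
    (a : FIGhom U W) (b : FIGhom W Y) n q (c : koszul W n q) :
  FIGexact a b -> kmap b c = 0 -> exists c', kmap a c' = c.
Proof.
move=> ex bc; have exS S : exists y, a q y == c S.
  by move/ffunP: bc => /(_ S); rewrite !ffunE => /(proj1 (ex _ _)) [y <-]; exists y.
exists [ffun S => xchoose (exS S)]; apply/ffunP => S; rewrite !ffunE.
exact: eqP (xchooseP (exS S)).
Qed.

Section ResolutionChase.
Variables (k : comPzRingType) (G : groupType) (V : FIGmod k G) (R : FIGprojres V).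

Lemma kmap_prdK j n q (x : koszul (pr_obj R j.+2) n q) :
  kmap (pr_d R j) (kmap (pr_d R j.+1) x) = 0.
Proof.
by apply/ffunP => S; rewrite !ffunE; apply: (proj2 (pr_exactS _)); exists (x S).
Qed.

Variables (n s : nat).
Hypothesis Vs0 : forall v : V s, v = 0.

(* The double complex (koszul (pr_obj R j) n (j + s))_j, graded along its
   anti-diagonal, is exact in total degree s: rows are exact by
   [koszul_exact_projective], columns by exactness of R and V_s = 0. *)
Definition kdcycle j : koszul (pr_obj R j) n (j + s) -> Prop :=
  if j is j'.+1 return koszul (pr_obj R j) n (j + s) -> Prop
  then fun f => kdiff (kmap (pr_d R j') f) = 0 else fun _ => True.

Lemma kdcycle_kdiff j (g : koszul (pr_obj R j) n (j + s))
    (f : koszul (pr_obj R j.+1) n (j.+1 + s)) :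
  kdiff g = kmap (pr_d R j) f -> kdcycle g.
Proof. by case: j g f => [//|j] g f /= E; rewrite -kmap_kdiff E kmap_prdK. Qed.

Lemma kdcycle_bound j (f : koszul (pr_obj R j) n (j + s)) : (j + s < n)%N ->
  kdcycle f -> exists c : koszul (pr_obj R j.+1) n (j + s),
  kdiff (f - kmap (pr_d R j) c) = 0.
Proof.
elim: j f => [|j IH] f jn cf.
  have [|c <-] := kmap_exact (c := f) (@pr_exact0 _ _ _ R).
    by apply/ffunP => S; rewrite !ffunE; apply: Vs0.
  by exists c; rewrite subrr kdiff0.
have [g dg] := koszul_exact_projective (@pr_proj _ _ _ R j) jn cf.
have [c'' dc''] := IH g (ltnW jn) (kdcycle_kdiff dg).
have [|c' dc'] := kmap_exact (c := f - kdiff c'') (@pr_exactS _ _ _ R j).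
  by rewrite kmapB kmap_kdiff -dg -kdiffB.
by exists c'; rewrite dc' subKr kdiffK.
Qed.

End ResolutionChase.

Lemma FIGhomol_vanish_deg (k : comPzRingType) (G : groupType) (V : FIGmod k G)
    (R : FIGprojres V) j s :
  (forall v : V s, v = 0) -> FIGhomol_vanish R j.+1 (j.+1 + s).
Proof.
move=> Vs0 x /FIGlower_kdiff [w dw].
pose x' : koszul (pr_obj R j.+1) (j + s).+1 (j.+1 + s) := [ffun=> x].
have dwx : kdiff w = kmap (pr_d R j) x' by rewrite dw; apply/ffunP => S; rewrite !ffunE.
have [c'' dc''] := kdcycle_bound Vs0 (ltnSn _) (kdcycle_kdiff dwx).
have [|c dc] := kmap_exact (c := x' - kdiff c'') (@pr_exactS _ _ _ R j).
  by rewrite kmapB kmap_kdiff -dwx -kdiffB.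
have cT : #|[set: 'I_(j + s).+1]| == (j + s).+1 by rewrite cardsT card_ord.
pose T : ksub (j + s).+1 (j + s).+1 := Sub [set: 'I_(j + s).+1] cT.
exists (c T), (kdiff c'' T); split; first exact: kdiff_lower.
by move/ffunP: dc => /(_ T); rewrite !ffunE => ->; rewrite subrK.
Qed.

Theorem mainTheorem13 (k : comPzRingType) (G : groupType) (V : FIGmod k G)
  (d : option nat) :
  FIGdeg_is V d ->
  forall (R : FIGprojres V) (i : nat), (1 <= i)%N ->
    FIGhd_le R i (addno i d).
Proof.
move=> [degV _] R [//|j] _ n; have V0 m (v : V m) : leo (Some m) d = false -> v = 0.
  by move=> md; apply/eqP; apply: (contraFT _ md) => /eqP v0; apply: degV; exists v.
case: d degV V0 => [e|] _ /= V0 en; last by apply: FIGhomol_vanish_res0 => m v; apply: V0.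
have jn : (j.+1 <= n)%N by lia.
rewrite -(subnKC jn); apply: FIGhomol_vanish_deg => v; apply: V0; lia.
Qed.
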